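(* Let $A\subset\mathbb{Z}$ be a set with $\dim(A)=1$ and cardinality $k$ that is composed of $s\le k-1$ pairwise disjoint segments $P_1,\dots,P_s$ with $\max P_i<\min P_{i+1}$ for $1\le i<s$. Suppose that every finite set $B\subset\mathbb{Z}$ with $\dim(B)=1$ whose minimum number of disjoint segments in a decomposition is $s-1\le |B|-1$ satisfies $\mathrm{vol}(B)\le 2^{s-2}(|B|-s+1)+1$. If $\mathrm{vol}(A)>2^{s-1}(|A|-s)+1$, then $P_i+P_j<P_i+P_{j+1}$ (i.e. every element of $P_i+P_j$ is smaller than every element of $P_i+P_{j+1}$) for all $1\le i\le s$ and $1\le j<s$.
   Context: A segment is a nonempty set of consecutive integers. Sets $A\subset G$, $B\subset G'$ in abelian groups are Freiman isomorphic of order 2 ($F_2$-isomorphic) if there is a bijection $\phi:A\to B$ with $x+y=z+t\iff\phi(x)+\phi(y)=\phi(z)+\phi(t)$ for all $x,y,z,t\in A$. The dimension $\dim(A)$ is the largest $d$ such that some $B\subset\mathbb{Z}^d$ not contained in a hyperplane is $F_2$-isomorphic to $A$. For a $1$-dimensional $A\subset\mathbb{Z}$, $\mathrm{vol}(A)=\max(\tilde A)+1$ where $\tilde A=(A-\min A)/\gcd(A-\min A)$ (in general the volume is the minimum number of lattice points in the convex hull of a $d$-dimensional $F_2$-isomorphic copy). *)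

From HB Require Import structures.
From mathcomp Require Import all_boot all_order all_algebra.
From mathcomp Require Import finmap.
Set Implicit Arguments. Unset Strict Implicit. Unset Printing Implicit Defensive.
Import Order.TTheory GRing.Theory Num.Theory.
Local Open Scope ring_scope.


Definition dotz (d : nat) (u v : 'rV[int]_d) : int := \sum_(i < d) u 0 i * v 0 i.

Definition F2_iso_on (d : nat) (A : {fset int}) (phi : int -> 'rV[int]_d) : Prop :=
  {in A &, injective phi} /\
  (forall x y z t, x \in A -> y \in A -> z \in A -> t \in A ->
     (x + y = z + t <-> phi x + phi y = phi z + phi t)).

Definition in_hyperplane (d : nat) (A : {fset int}) (phi : int -> 'rV[int]_d) : Prop :=
  exists (a : 'rV[int]_d) (c : int), a != 0 /\ forall x, x \in A -> dotz a (phi x) = c.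

Definition realizable_in_dim (A : {fset int}) (d : nat) : Prop :=
  exists phi : int -> 'rV[int]_d, F2_iso_on A phi /\ ~ in_hyperplane A phi.

Definition dim_is_one (A : {fset int}) : Prop :=
  realizable_in_dim A 1 /\ forall d : nat, (1 < d)%N -> ~ realizable_in_dim A d.

Definition fmin (A : {fset int}) : int := \big[Num.min/head 0 (A : seq int)]_(a <- A) a.
Definition fmax (A : {fset int}) : int := \big[Num.max/head 0 (A : seq int)]_(a <- A) a.

(* vol(A) = max(Atilde) + 1, Atilde = (A - min A) / gcd(A - min A), for 1-dim A *)
Definition vol1 (A : {fset int}) : int :=
  let g := \big[gcdz/0]_(a <- A) (a - fmin A) in
  ((fmax A - fmin A) %/ g)%Z + 1.

Definition seg_decomp (A : {fset int}) (s : nat) (lo hi : nat -> int) : Prop :=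
  (forall i, (i < s)%N -> lo i <= hi i) /\
  (forall i, (i.+1 < s)%N -> hi i < lo i.+1) /\
  (forall x : int, x \in A <-> exists2 i, (i < s)%N & lo i <= x <= hi i).

Definition min_nseg (A : {fset int}) (s : nat) : Prop :=
  (exists lo hi, seg_decomp A s lo hi) /\
  forall t lo hi, seg_decomp A t lo hi -> (s <= t)%N.

(* Suppose some x + u >= y + v with x, y in P_i, u in P_j, v in P_(j+1).  Then the
   gap between P_j and P_(j+1) is shorter than P_i, and filling it in yields a set B
   with s - 1 segments, |B| <= |A| + |P_i| - 2 and vol(B) >= vol(A) (B contains A
   and both contain two consecutive integers, so both volumes are max - min + 1).
   Every new element z satisfies z + min P_i = w + max P_j with w in P_i, so any
   Freiman image of B lies in the affine hull of the image of A and dim(B) = 1.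
   As |A| >= |P_i| + s - 1, the hypothesis on B gives
   vol(A) <= 2^(s-2)(|B| - s + 1) + 1 <= 2^(s-1)(|A| - s) + 1. *)

From HB Require Import structures.
From mathcomp Require Import all_boot all_order all_algebra.
From mathcomp Require Import finmap zify.
Set Implicit Arguments. Unset Strict Implicit. Unset Printing Implicit Defensive.
Import Order.TTheory GRing.Theory Num.Theory.
Local Open Scope fset_scope.
Local Open Scope ring_scope.

Lemma head_fset_mem (A : {fset int}) a : a \in A -> head 0 (A : seq int) \in A.
Proof.
have memE y : (y \in A) = (y \in (A : seq int)) by [].
by rewrite !memE; case: (A : seq int) => //= b t _; rewrite mem_head.
Qed.

Lemma fmin_le (A : {fset int}) a : a \in A -> fmin A <= a.
Proof. by move=> aA; exact: ge_bigmin_seq. Qed.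

Lemma le_fmax (A : {fset int}) a : a \in A -> a <= fmax A.
Proof. by move=> aA; exact: le_bigmax_seq. Qed.

Lemma fmin_fsubset (A B : {fset int}) a : a \in A -> A `<=` B -> fmin B <= fmin A.
Proof.
move=> aA /fsubsetP AB; rewrite [fmin A]/fmin big_seq.
by apply: le_bigmin => [|b bA]; apply/fmin_le/AB => //; apply: head_fset_mem aA.
Qed.

Lemma fmax_fsubset (A B : {fset int}) a : a \in A -> A `<=` B -> fmax A <= fmax B.
Proof.
move=> aA /fsubsetP AB; rewrite [fmax A]/fmax big_seq.
by apply: bigmax_le => [|b bA]; apply/le_fmax/AB => //; apply: head_fset_mem aA.
Qed.

Lemma dvdz_biggcd (r : seq int) (F : int -> int) a :
  a \in r -> (\big[gcdz/0]_(b <- r) F b %| F a)%Z.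
Proof.
elim: r => [//|b r IH]; rewrite in_cons big_cons => /predU1P[->|/IH].
  exact: dvdz_gcdl.
exact: dvdz_trans (dvdz_gcdr _ _).
Qed.

Lemma vol1_consecutive (A : {fset int}) a : a \in A -> a + 1 \in A ->
  vol1 A = fmax A - fmin A + 1.
Proof.
move=> aA a1A; rewrite /vol1.
set g := \big[gcdz/0]_(b <- A) (b - fmin A).
have g_ge0 : 0 <= g.
  by rewrite /g; case: (A : seq int) => [|b r]; rewrite ?big_nil ?big_cons.
have g_dvd1 : (g %| 1)%Z.
  have := rpredB (dvdz_biggcd (fun b => b - fmin A) a1A)
                (dvdz_biggcd (fun b => b - fmin A) aA).
  by rewrite opprB addrA subrK addrAC subrr add0r.
suff -> : g = 1 by rewrite divz1.
by move: g_dvd1; rewrite dvdz1; lia.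
Qed.

Lemma vol1_fsubset (A B : {fset int}) a : a \in A -> a + 1 \in A -> A `<=` B ->
  vol1 A <= vol1 B.
Proof.
move=> aA a1A AB; have /fsubsetP sAB := AB.
rewrite (vol1_consecutive aA a1A) (vol1_consecutive (sAB _ aA) (sAB _ a1A)).
by have := fmin_fsubset aA AB; have := fmax_fsubset aA AB; lia.
Qed.

Definition separated (s : nat) (lo hi : nat -> int) : Prop :=
  forall k, (k.+1 < s)%N -> hi k + 1 < lo k.+1.

Section SegDecomp.
Variables (X : {fset int}) (s : nat) (lo hi : nat -> int).
Hypothesis decX : seg_decomp X s lo hi.

Lemma seg_decomp_le i : (i < s)%N -> lo i <= hi i.
Proof. by case: decX => + _; apply. Qed.

Lemma seg_decomp_lt k l : (k < l)%N -> (l < s)%N -> hi k < lo l.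
Proof.
have [_ [gap _]] := decX.
elim: l => // l IH; rewrite ltnS leq_eqVlt => /predU1P[-> ls|kl ls]; first exact: gap.
by have := IH kl (ltnW ls); have := gap l ls; have := seg_decomp_le (ltnW ls); lia.
Qed.

Lemma hi_seg_decomp_lt k l : (k < l)%N -> (l < s)%N -> hi k < hi l.
Proof. by move=> kl ls; have := seg_decomp_lt kl ls; have := seg_decomp_le ls; lia. Qed.

Lemma lo_seg_decomp_lt k l : (k < l)%N -> (l < s)%N -> lo k < lo l.
Proof.
by move=> kl ls; have := seg_decomp_lt kl ls; have := seg_decomp_le (ltn_trans kl ls); lia.
Qed.

Lemma lo_seg_decomp_mono k l : (k <= l)%N -> (l < s)%N -> lo k <= lo l.
Proof.
by rewrite leq_eqVlt => /predU1P[-> //|kl] ls; apply/ltW/lo_seg_decomp_lt.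
Qed.

Lemma hi_seg_decomp_mono k l : (k <= l)%N -> (l < s)%N -> hi k <= hi l.
Proof.
by rewrite leq_eqVlt => /predU1P[-> //|kl] ls; apply/ltW/hi_seg_decomp_lt.
Qed.

Lemma lo_seg_decomp_inj k l : (k < s)%N -> (l < s)%N -> lo k = lo l -> k = l.
Proof.
move=> ks ls; case: (ltngtP k l) => [kl|lk|//];
  [have := lo_seg_decomp_lt kl ls | have := lo_seg_decomp_lt lk ks]; lia.
Qed.

Lemma hi_seg_decomp_inj k l : (k < s)%N -> (l < s)%N -> hi k = hi l -> k = l.
Proof.
move=> ks ls; case: (ltngtP k l) => [kl|lk|//];
  [have := hi_seg_decomp_lt kl ls | have := hi_seg_decomp_lt lk ks]; lia.
Qed.

Lemma mem_seg_decomp i (x : int) : (i < s)%N -> lo i <= x <= hi i -> x \in X.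
Proof. by move=> ilt xi; apply/decX.2.2; exists i. Qed.

Lemma seg_decomp_right_end (z : int) :
  z \in X -> z + 1 \notin X -> exists2 l, (l < s)%N & z = hi l.
Proof.
move=> /decX.2.2 [l ls /andP[lo_z z_hi]] z1X; exists l => //.
apply/eqP; rewrite eq_le z_hi /=; apply: contraR z1X; rewrite -ltNge => z_lt.
by apply: (mem_seg_decomp ls); lia.
Qed.

Lemma separated_hi_notin l : separated s lo hi -> (l < s)%N -> hi l + 1 \notin X.
Proof.
move=> sep ls; apply/negP => /decX.2.2 [k ks /andP[lo_k k_hi]].
have [kl|lk] := leqP k l; first by have := hi_seg_decomp_mono kl ls; lia.
by have := lo_seg_decomp_mono lk ks; have := sep l (leq_ltn_trans lk ks); lia.
Qed.

(* Segments [k] and [k.+1] of [X] merge into the single segment [[lo k, hi k.+1]] of [Y]. *)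
Lemma seg_decomp_merge k (Y : {fset int}) : (k.+1 < s)%N ->
  (forall x, x \in Y <-> x \in X \/ hi k < x < lo k.+1) ->
  seg_decomp Y s.-1 (lo \o bump k.+1) (hi \o bump k).
Proof.
move=> ks memY; split; [|split] => [i ilt /=|i ilt /=|x].
- have bump_le : (bump k.+1 i <= bump k i)%N by rewrite /bump; lia.
  have bump_lt : (bump k i < s)%N by rewrite /bump; lia.
  exact: le_trans (lo_seg_decomp_mono bump_le bump_lt) (seg_decomp_le bump_lt).
- by apply: seg_decomp_lt; rewrite /bump; lia.
rewrite memY; split.
- case=> [/decX.2.2 [l ls /andP[lo_x x_hi]] | x_gap].
    exists (l - (k < l))%N; first by lia.
    rewrite /= (le_trans _ lo_x) ?(le_trans x_hi) //.
      by apply: hi_seg_decomp_mono; rewrite /bump; lia.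
    by apply: lo_seg_decomp_mono; rewrite /bump; lia.
  exists k; first by lia.
  rewrite /= /bump leqnn ltnn add0n add1n.
  by have := seg_decomp_le (ltnW ks); have := seg_decomp_le ks; lia.
- case=> i ilt /andP[]; rewrite /=.
  have [-> {i ilt}|ik] := eqVneq i k.
    rewrite /bump leqnn ltnn add0n add1n => lo_x x_hi.
    have [x_hik|hik_x] := lerP x (hi k).
      by left; apply: (mem_seg_decomp (ltnW ks)); lia.
    have [lok_x|x_lok] := lerP (lo k.+1) x; first by left; apply: (mem_seg_decomp ks); lia.
    by right; lia.
  have bump_lt : (bump k i < s)%N by rewrite /bump; lia.
  have -> : bump k.+1 i = bump k i by rewrite /bump; lia.
  by move=> lo_x x_hi; left; apply: (mem_seg_decomp bump_lt); lia.
Qed.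

End SegDecomp.

Lemma separated_min_nseg X s lo hi :
  seg_decomp X s lo hi -> separated s lo hi -> min_nseg X s.
Proof.
move=> decX sep; split; first by exists lo, hi.
(* Each [hi l] is a right end of [X], and right ends end a segment of any decomposition. *)
move=> t lo' hi' decX'.
have ends_sub : [fset hi l | l in iota 0 s] `<=` [fset hi' l | l in iota 0 t].
  apply/fsubsetP => z /imfsetP[l /=]; rewrite mem_iota => ls ->.
  have ls' : (l < s)%N by lia.
  have hiX : hi l \in X.
    by apply: (mem_seg_decomp decX ls'); rewrite (seg_decomp_le decX ls') lexx.
  have [l' l't ->] := seg_decomp_right_end decX' hiX (separated_hi_notin decX sep ls').
  by apply/imfsetP; exists l'; rewrite //= mem_iota.
have := fsubset_leq_card ends_sub; rewrite card_in_imfset /=; last first.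
  move=> k l; rewrite !mem_iota !add0n => /andP[_ ks] /andP[_ ls].
  exact: (hi_seg_decomp_inj decX).
rewrite undup_id ?iota_uniq // size_iota => /leq_trans; apply.
by rewrite (leq_trans (leq_imfset_card _ _ _)) //= undup_id ?iota_uniq ?size_iota.
Qed.

Lemma separated_merge s (lo hi : nat -> int) k : separated s lo hi ->
  separated s.-1 (lo \o bump k.+1) (hi \o bump k).
Proof. by move=> sep i ilt /=; rewrite bumpS; apply: sep; rewrite /bump; lia. Qed.

Lemma min_nsegP X s lo hi :
  seg_decomp X s lo hi -> min_nseg X s <-> separated s lo hi.
Proof.
move=> decX; split; last exact: separated_min_nseg.
move=> [_ minX] k ks; rewrite ltNge; apply/negP => touching.
have memX x : x \in X <-> x \in X \/ hi k < x < lo k.+1.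
  by split; [left | case=> //; lia].
by have := minX _ _ _ (seg_decomp_merge decX ks memX); lia.
Qed.

(* For [b + 1 < a] the length [`|b - a + 1|] is junk, hence the hypothesis [a <= b + 1] below. *)
Definition fsegment (a b : int) : {fset int} := [fset a + n%:Z | n in iota 0 `|b - a + 1|].

Lemma mem_fsegment (a b x : int) : a <= b + 1 -> (x \in fsegment a b) = (a <= x <= b).
Proof.
move=> ab; apply/imfsetP/idP => [[n /=] | x_ab].
  by rewrite mem_iota => /andP[_ n_lt] ->; lia.
by exists `|x - a|%N; rewrite /= ?mem_iota; lia.
Qed.

Lemma card_fsegment (a b : int) : a <= b + 1 -> #|`fsegment a b|%:Z = b - a + 1.
Proof.
move=> ab; rewrite card_imfset /= ?undup_id ?iota_uniq ?size_iota //.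
  by lia.
by move=> m n /addrI /eqP; rewrite eqz_nat => /eqP.
Qed.

Definition fill_gap (A : {fset int}) (a b : int) : {fset int} :=
  A `|` fsegment (a + 1) (b - 1).

Lemma fill_gap_fsubset (A : {fset int}) (a b : int) : A `<=` fill_gap A a b.
Proof. exact: fsubsetUl. Qed.

Lemma mem_fill_gap (A : {fset int}) (a b x : int) : a < b ->
  (x \in fill_gap A a b) = (x \in A) || (a < x < b).
Proof. by move=> ab; rewrite in_fsetU mem_fsegment; [congr (_ || _); lia | lia]. Qed.

Lemma card_fill_gap (A : {fset int}) (a b : int) : a < b ->
  #|`fill_gap A a b|%:Z <= #|`A|%:Z + (b - a - 1).
Proof.
move=> ab; have ab' : a + 1 <= b - 1 + 1 by lia.
have := card_fsegment ab'; have := cardfsUI A (fsegment (a + 1) (b - 1)).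
rewrite /fill_gap; lia.
Qed.

Lemma card_seg_decomp_ge X s lo hi i : seg_decomp X s lo hi -> (i < s)%N ->
  hi i - lo i + s%:Z <= #|`X|%:Z.
Proof.
move=> decX ilt; have lo_hi := seg_decomp_le decX ilt.
set P := fsegment (lo i) (hi i); set L := [fset lo k | k in rem i (iota 0 s)].
have memP x : (x \in P) = (lo i <= x <= hi i) by apply: mem_fsegment; lia.
have cardP : #|`P|%:Z = hi i - lo i + 1 by apply: card_fsegment; lia.
have memL k : (k \in rem i (iota 0 s)) = (k != i) && (k < s)%N.
  by rewrite mem_rem_uniq ?iota_uniq // inE mem_iota.
have cardL : #|`L| = s.-1.
  rewrite card_in_imfset /= ?undup_id ?rem_uniq ?iota_uniq ?size_rem ?size_iota //.
    by rewrite mem_iota.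
  move=> k l; rewrite !memL => /andP[_ ks] /andP[_ ls].
  exact: (lo_seg_decomp_inj decX).
have lo_notin k : k != i -> (k < s)%N -> (lo k \in P) = false.
  rewrite memP neq_ltn => /orP[ki|ik] ks.
    by have := lo_seg_decomp_lt decX ki ilt; lia.
  by have := seg_decomp_lt decX ik ks; lia.
have PL0 : P `&` L = fset0.
  apply/fsetP => x; rewrite !inE; apply/negP => /andP[+ /imfsetP[k /=]].
  by rewrite memL => + /andP[ki ks] xk; rewrite xk lo_notin.
have PL_X : P `|` L `<=` X.
  apply/fsubsetP => x; rewrite in_fsetU memP => /orP[x_i | /imfsetP[k /=]].
    by apply: (mem_seg_decomp decX ilt).
  rewrite memL => /andP[_ ks] ->; apply: (mem_seg_decomp decX ks).
  by rewrite lexx (seg_decomp_le decX ks).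
have := fsubset_leq_card PL_X; have := cardfsUI P L; rewrite PL0 cardfs0; lia.
Qed.

Lemma dotzD d (a u v : 'rV[int]_d) : dotz a (u + v) = dotz a u + dotz a v.
Proof. by rewrite /dotz -big_split; apply: eq_bigr => k _; rewrite mxE mulrDr. Qed.

Lemma realizable_in_dim1 (B : {fset int}) (a b : int) :
  a \in B -> b \in B -> a != b -> realizable_in_dim B 1.
Proof.
move=> aB bB ab; exists (fun z => \row_(_ < 1) z); split; first split.
- by move=> x y _ _ /matrixP /(_ 0 0); rewrite !mxE.
- move=> x y z t _ _ _ _; split => [xyzt | /matrixP /(_ 0 0)]; last by rewrite !mxE.
  by apply/matrixP => p q; rewrite !mxE xyzt.
move=> [c [e [c0 hyp]]]; have := hyp a aB; rewrite -(hyp b bB) /dotz !big_ord1 !mxE.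
have c00 : c 0 0 != 0.
  by apply: contra c0 => /eqP c00; apply/eqP/matrixP => p q; rewrite !ord1 mxE c00.
by move/(mulfI c00)/eqP; rewrite (negbTE ab).
Qed.

Lemma realizable_in_dim_restrict (A B : {fset int}) d : A `<=` B ->
  (forall z, z \in B -> exists a b c,
     [/\ a \in A, b \in A, c \in A & z + c = a + b]) ->
  realizable_in_dim B d -> realizable_in_dim A d.
Proof.
move=> /fsubsetP AB spanB [phi [[inj F2] notin_hyp]].
exists phi; split; first split.
- by move=> x y xA yA; apply: inj; apply: AB.
- by move=> x y z t xA yA zA tA; apply: F2; apply: AB.
move=> [n [e [n0 hyp]]]; apply: notin_hyp; exists n, e; split => // z zB.
have [a [b [c [aA bA cA zcab]]]] := spanB z zB.
have := (F2 _ _ _ _ zB (AB _ cA) (AB _ aA) (AB _ bA)).1 zcab.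
by move/(congr1 (dotz n)); rewrite !dotzD (hyp a aA) (hyp b bA) (hyp c cA); lia.
Qed.

Section FillGap.
Variables (A : {fset int}) (s : nat) (lo hi : nat -> int) (j : nat).
Hypotheses (decA : seg_decomp A s lo hi) (jlt : (j.+1 < s)%N).
Local Notation B := (fill_gap A (hi j) (lo j.+1)).

Let gap_lt : hi j < lo j.+1 := seg_decomp_lt decA (ltnSn j) jlt.

Lemma min_nseg_fill_gap : separated s lo hi -> min_nseg B s.-1.
Proof.
have memB x : x \in B <-> x \in A \/ hi j < x < lo j.+1.
  by rewrite mem_fill_gap //; split => /orP.
by move=> sep; apply/(min_nsegP (seg_decomp_merge decA jlt memB))/separated_merge.
Qed.

Lemma dim_is_one_fill_gap i : (i < s)%N -> lo j.+1 - hi j <= hi i - lo i ->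
  dim_is_one A -> dim_is_one B.
Proof.
move=> ilt wide [_ dimA]; have /fsubsetP AB := fill_gap_fsubset A (hi j) (lo j.+1).
have hjA : hi j \in A.
  by apply: (mem_seg_decomp decA (ltnW jlt)); rewrite lexx (seg_decomp_le decA (ltnW jlt)).
have lojA : lo j.+1 \in A.
  by apply: (mem_seg_decomp decA jlt); rewrite lexx (seg_decomp_le decA jlt).
split; first by apply: (realizable_in_dim1 (AB _ hjA) (AB _ lojA)); rewrite lt_eqF.
move=> d d_gt1 realB; apply: (dimA d d_gt1); apply: realizable_in_dim_restrict realB.
  exact: fill_gap_fsubset.
move=> z; rewrite mem_fill_gap // => /orP[zA | z_gap]; first by exists z, z, z.
exists (lo i + (z - hi j)), (hi j), (lo i); split => //; last by lia.
- by apply: (mem_seg_decomp decA ilt); lia.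
- by apply: (mem_seg_decomp decA ilt); have := seg_decomp_le decA ilt; lia.
Qed.

End FillGap.

Lemma ler_pow2_double (s : nat) (a b : int) : (1 < s)%N ->
  b - s%:Z + 1 <= 2 * (a - s%:Z) ->
  2%:Q ^ (s%:Z - 2) * (b%:~R - s%:Q + 1) <= 2%:Q ^ (s%:Z - 1) * (a%:~R - s%:Q).
Proof.
move=> s_gt1; rewrite -(ler_int rat) => ineq.
have -> : s%:Z - 1 = (s%:Z - 2) + 1 by rewrite -addrA.
rewrite [in X in _ <= X]expfzDr // expr1z -mulrA ler_wpM2l ?exprz_ge0 //.
by move: ineq; rewrite rmorphM rmorphD !rmorphB /=.
Qed.

Theorem lemma3p1 (A : {fset int}) (s : nat) (lo hi : nat -> int) :
  dim_is_one A ->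
  seg_decomp A s lo hi ->
  min_nseg A s ->
  (s <= #|`A|%fset - 1)%N ->
  (forall B : {fset int}, dim_is_one B -> min_nseg B s.-1 ->
     (s%:Z - 1 <= #|`B|%fset%:Z - 1) ->
     (vol1 B)%:~R <= (2%:Q ^ (s%:Z - 2)) * (#|`B|%fset%:Q - s%:Q + 1) + 1) ->
  (vol1 A)%:~R > (2%:Q ^ (s%:Z - 1)) * (#|`A|%fset%:Q - s%:Q) + 1 ->
  forall i j, (i < s)%N -> (j.+1 < s)%N ->
    forall x y u v : int,
      lo i <= x <= hi i -> lo j <= u <= hi j ->
      lo i <= y <= hi i -> lo j.+1 <= v <= hi j.+1 ->
      x + u < y + v.
Proof.
move=> dimA decA minA _ volB_le volA_gt i j ilt jlt x y u v
  /andP[lo_x x_hi] /andP[lo_u u_hi] /andP[lo_y y_hi] /andP[lo_v v_hi].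
rewrite ltNge; apply/negP => yv_le_xu.
have wide : lo j.+1 - hi j <= hi i - lo i by lia.
have gap : hi j < lo j.+1 := seg_decomp_lt decA (ltnSn j) jlt.
have dimB := dim_is_one_fill_gap decA jlt ilt wide dimA.
have minB := min_nseg_fill_gap decA jlt ((min_nsegP decA).1 minA).
have AB := fill_gap_fsubset A (hi j) (lo j.+1).
have cardB := card_fill_gap A gap.
set B := fill_gap A (hi j) (lo j.+1) in dimB minB AB cardB.
have cardA := card_seg_decomp_ge decA ilt.
have cardAB := fsubset_leq_card AB.
have volB : (vol1 B)%:~R <= 2%:Q ^ (s%:Z - 2) * (#|`B|%:Q - s%:Q + 1) + 1.
  by apply: volB_le => //; lia.
have volAB : vol1 A <= vol1 B.
  by apply: (vol1_fsubset (a := lo i)) AB; apply: (mem_seg_decomp decA ilt); lia.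
have halve : 2%:Q ^ (s%:Z - 2) * (#|`B|%:Q - s%:Q + 1) <=
             2%:Q ^ (s%:Z - 1) * (#|`A|%:Q - s%:Q).
  by apply: ler_pow2_double; lia.
move: volA_gt; rewrite ltNge => /negP; apply.
by apply: le_trans (le_trans _ volB) _; [rewrite ler_int | rewrite lerD2r].
Qed.
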